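(* Let $\mathcal{E}$ be a set of entities and $\mathcal{R}$ a set of relations, and let a triple be an element of $\mathcal{E}\times\mathcal{R}\times\mathcal{E}$. Fix a test set $\mathcal{T}_{test}$ of triples and an evaluation assumption WA $\in\{\text{CWA},\text{RS-POWA}\}$, which determines a set $N_{WA}$ of triples disjoint from $\mathcal{T}_{test}$ (described in the context). Let $\mathcal{T}^1_{predict}$ be a finite set of predicted triples, each carrying a real score, and let $\mathcal{T}^2_{predict}=\mathcal{T}^1_{predict}\cup\{(h,r,t)\}$, where $(h,r,t)\notin\mathcal{T}^1_{predict}$ is a triple with a score and the triples of $\mathcal{T}^1_{predict}$ keep their scores. If $(h,r,t)\in\mathcal{T}_{test}$ (i.e. $(h,r,t)$ is in the positive set $\mathcal{T}^{WA+}_{predict}=\mathcal{T}^2_{predict}\cap\mathcal{T}_{test}$), then $RS^2_{TSP}>RS^1_{TSP}$, where $RS^k_{TSP}$ denotes the ranking score of $\mathcal{T}^k_{predict}$.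
   Context: Ranking score: given a finite predicted set $\mathcal{T}_{predict}$ with scores, sort it in descending order of score (with a fixed tie-breaking, consistent when a triple is added, so that the relative order of the original triples is unchanged) to obtain the list $tri_1,tri_2,\dots$ with positions $i\ge 1$. Define $\mathcal{T}^{WA+}_{predict}=\mathcal{T}_{predict}\cap\mathcal{T}_{test}$, $\mathcal{T}^{WA-}_{predict}=\mathcal{T}_{predict}\cap N_{WA}$, $\mathcal{T}^{WA}_{predict}=\mathcal{T}^{WA+}_{predict}\cup\mathcal{T}^{WA-}_{predict}$. Set $rs_{tri_i}=1/i$ if $tri_i\in\mathcal{T}^{WA+}_{predict}$ and $rs_{tri_i}=-1/i$ if $tri_i\in\mathcal{T}^{WA-}_{predict}$, and $RS_{TSP}=\sum_{tri_i\in\mathcal{T}^{WA}_{predict}} rs_{tri_i}$ (triples in neither set occupy positions but contribute nothing). Under the closed-world assumption (CWA), $N_{CWA}$ is the set of all triples not in $\mathcal{T}_{test}$. Under the relation-similarity partial-open-world assumption (RS-POWA), given a known triple set $\mathcal{T}$ (training triples) and a similarity $sim(r,r')=\max\big(|P_r\cap P_{r'}|/|P_r|,\ |P_r\cap P_{r'}|/|P_{r'}|\big)$, where $P_r$ is the set of entity pairs linked by $r$ in the training and test triples, and threshold $\theta$ (e.g. $0.8$), $N_{RS\text{-}POWA}$ is the set of triples $(h,r,t)\notin\mathcal{T}_{test}$ for which some relation $r'\neq r$ with $(h,r',t)$ a known triple satisfies $sim(r,r')<\theta$. *)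

From mathcomp Require Import all_boot all_order all_algebra.
Set Implicit Arguments. Unset Strict Implicit. Unset Printing Implicit Defensive.
Import Order.TTheory GRing.Theory Num.Theory.
Local Open Scope ring_scope.

Definition triple (E Rel : finType) : finType := (E * Rel * E)%type.

Section KG.
Variables (R : realFieldType) (E Rel : finType).
Local Notation T := (triple E Rel).

Inductive assumption := CWA | RSPOWA.

Definition pairs_of (train test : {set T}) (r : Rel) : {set E * E} :=
  [set p : E * E | ((p.1, r, p.2) \in train) || ((p.1, r, p.2) \in test)].

Definition sim (train test : {set T}) (r r' : Rel) : R :=
  let P := pairs_of train test r in
  let P' := pairs_of train test r' in
  Num.max (#|P :&: P'|%:R / #|P|%:R) (#|P :&: P'|%:R / #|P'|%:R).

Definition N_CWA (test : {set T}) : {set T} := [set x | x \notin test].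

Definition N_RSPOWA (train test : {set T}) (theta : R) : {set T} :=
  [set x : T | (x \notin test) &&
     [exists r' : Rel, (r' != x.1.2) && ((x.1.1, r', x.2) \in train)
                       && (sim train test x.1.2 r' < theta)]].

Definition N_WA (wa : assumption) (train test : {set T}) (theta : R) : {set T} :=
  match wa with
  | CWA => N_CWA test
  | RSPOWA => N_RSPOWA train test theta
  end.

Definition rank_le (s : T -> R) (tb : rel T) : rel T :=
  fun x y => (s y < s x) || ((s x == s y) && tb x y).

Definition ranked (s : T -> R) (tb : rel T) (P : {set T}) : seq T :=
  sort (rank_le s tb) (enum P).

Definition rs_sign (test N : {set T}) (x : T) : R :=
  if x \in test then 1 else if x \in N then -1 else 0.

Definition RS_TSP (test N : {set T}) (s : T -> R) (tb : rel T) (P : {set T}) : R :=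
  let l := ranked s tb P in
  \sum_(p <- zip l (iota 1 (size l))) rs_sign test N p.1 / (p.2)%:R.

End KG.

From mathcomp Require Import all_boot all_order all_algebra.
Set Implicit Arguments. Unset Strict Implicit. Unset Printing Implicit Defensive.
Import Order.TTheory GRing.Theory Num.Theory.
Local Open Scope ring_scope.

(* Let k be the number of triples of P1 ranked before x. Adding x leaves those
   k triples in place, puts x at position k + 1 where it scores 1/(k + 1), and
   moves every later triple down one position. Each later triple contributes
   +-1/i, so the move changes its contribution by at most
   1/(k + 1 + j) - 1/(k + 2 + j), and these bounds telescope to strictly less
   than 1/(k + 1). *)

Section InsertSorted.
Variables (T : eqType) (le : rel T).
Hypotheses (le_total : total le) (le_trans : transitive le)
  (le_anti : antisymmetric le).

Lemma sort_cons_split (s : seq T) (x : T) :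
  exists a b, sort le s = a ++ b /\ sort le (x :: s) = a ++ x :: b.
Proof.
pose p y := le y x.
exists (filter p (sort le s)), (filter (predC p) (sort le s)).
set a := filter _ _; set b := filter _ _.
have le_xb : all (le x) b.
  apply/allP => y; rewrite mem_filter /= /p => /andP[yx _].
  by case/orP: (le_total x y) => // xy; rewrite xy in yx.
have le_ax : all p a by exact: filter_all.
have sorted_axb : sorted le (a ++ x :: b).
  have pairwise_s : pairwise le (sort le s).
    by rewrite -(sorted_pairwise le_trans) sort_sorted.
  rewrite (sorted_pairwise le_trans) pairwise_cat /= le_xb.
  rewrite !pairwise_filter // allrel_consr le_ax !andbT.
  apply/allrelP => y z /(allP le_ax) yx /(allP le_xb); exact: le_trans.
have perm_ab : perm_eq (sort le s) (a ++ b) by rewrite perm_sym perm_filterC.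
split; apply: (sorted_eq le_trans le_anti); rewrite ?sort_sorted //.
- apply: (subseq_sorted le_trans _ sorted_axb).
  by rewrite cat_subseq ?subseq_cons.
- rewrite perm_sort perm_sym (perm_catCA a [:: x] b) /= perm_cons perm_sym.
  by rewrite -(perm_sort le s).
Qed.
End InsertSorted.

Section RankSum.
Variables (R : realFieldType) (T : Type) (w : T -> R).

Fixpoint rank_sum (s : seq T) (n : nat) : R :=
  if s is y :: s' then w y / n%:R + rank_sum s' n.+1 else 0.

Lemma rank_sumE (s : seq T) (n : nat) :
  \sum_(p <- zip s (iota n (size s))) w p.1 / p.2%:R = rank_sum s n.
Proof. by elim: s n => [|y s IHs] n; rewrite ?big_nil // big_cons IHs. Qed.

Lemma rank_sum_cat (s1 s2 : seq T) (n : nat) :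
  rank_sum (s1 ++ s2) n = rank_sum s1 n + rank_sum s2 (n + size s1).
Proof.
elim: s1 n => [|y s1 IHs1] n /=; first by rewrite add0r addn0.
by rewrite IHs1 addrA addnS.
Qed.

Hypothesis w_le1 : forall y, `|w y| <= 1.

Lemma rank_sum_shift_lt (s : seq T) (n : nat) :
  (0 < n)%N -> rank_sum s n - rank_sum s n.+1 < n%:R^-1.
Proof.
elim: s n => [|y s IHs] n n_gt0 /=; first by rewrite subrr invr_gt0 ltr0n.
have IH := IHs n.+1 isT.
have inv_lt : n.+1%:R^-1 < n%:R^-1 :> R.
  by rewrite ltf_pV2 ?posrE ?ltr0n // ltr_nat.
have term_le : w y / n%:R - w y / n.+1%:R <= n%:R^-1 - n.+1%:R^-1.
  rewrite -mulrBr -[X in _ <= X]mul1r ler_wpM2r ?subr_ge0 ?(ltW inv_lt) //.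
  exact: le_trans (ler_norm _) (w_le1 y).
rewrite opprD addrACA -[ltRHS](subrK n.+1%:R^-1).
exact: ler_ltD term_le IH.
Qed.

Lemma rank_sum_insert_lt (a b : seq T) (x : T) (n : nat) :
  w x = 1 -> (0 < n)%N -> rank_sum (a ++ b) n < rank_sum (a ++ x :: b) n.
Proof.
move=> wx1 n_gt0; rewrite !rank_sum_cat /= wx1 mul1r ltrD2l -ltrBlDr.
exact: rank_sum_shift_lt (leq_trans n_gt0 (leq_addr _ _)).
Qed.

End RankSum.

Section RankOrder.
Variables (R : realFieldType) (E Rel : finType).
Variables (s : triple E Rel -> R) (tb : rel (triple E Rel)).

Lemma rank_le_total : total tb -> total (rank_le s tb).
Proof.
move=> tb_total u v; rewrite /rank_le.
by case: (ltgtP (s u) (s v)) => //= _; apply: tb_total.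
Qed.

Lemma rank_le_trans : transitive tb -> transitive (rank_le s tb).
Proof.
move=> tb_trans v u w; rewrite /rank_le.
case/orP=> [lt_vu|/andP[/eqP eq_uv tb_uv]].
  case/orP=> [lt_wv|/andP[/eqP eq_vw _]]; first by rewrite (lt_trans lt_wv lt_vu).
  by rewrite -eq_vw lt_vu.
case/orP=> [lt_wv|/andP[/eqP eq_vw tb_vw]]; first by rewrite eq_uv lt_wv.
by rewrite eq_uv eq_vw eqxx (tb_trans _ _ _ tb_uv tb_vw) orbT.
Qed.

Lemma rank_le_anti : antisymmetric tb -> antisymmetric (rank_le s tb).
Proof.
move=> tb_anti u v; rewrite /rank_le => /andP[].
case/orP=> [lt_vu|/andP[/eqP eq_uv tb_uv]].
  case/orP=> [lt_uv|/andP[/eqP eq_vu _]].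
    by move: (lt_trans lt_vu lt_uv); rewrite ltxx.
  by move: lt_vu; rewrite eq_vu ltxx.
case/orP=> [lt_uv|/andP[_ tb_vu]]; first by move: lt_uv; rewrite eq_uv ltxx.
by apply: tb_anti; rewrite tb_uv tb_vu.
Qed.

End RankOrder.

Lemma normr_rs_sign_le1 (R : realFieldType) (E Rel : finType)
    (test N : {set triple E Rel}) (y : triple E Rel) :
  `|rs_sign R test N y| <= 1.
Proof.
rewrite /rs_sign; case: ifP => _; last case: ifP => _.
all: by rewrite ?normrN ?normr1 ?normr0.
Qed.

Lemma perm_enum_setU1 (T : finType) (A : {set T}) (x : T) :
  x \notin A -> perm_eq (enum (x |: A)) (x :: enum A).
Proof.
move=> xA; apply: uniq_perm; rewrite ?enum_uniq //= ?mem_enum ?xA ?enum_uniq //.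
by move=> y; rewrite mem_enum in_setU1 inE mem_enum.
Qed.

Theorem theorem1 (R : realFieldType) (E Rel : finType)
    (train test : {set triple E Rel}) (theta : R) (wa : assumption)
    (s : triple E Rel -> R) (tb : rel (triple E Rel))
    (tb_total : total tb) (tb_trans : transitive tb)
    (tb_anti : antisymmetric tb)
    (P1 : {set triple E Rel}) (x : triple E Rel) :
  x \notin P1 -> x \in test ->
  RS_TSP test (N_WA wa train test theta) s tb P1 <
  RS_TSP test (N_WA wa train test theta) s tb (x |: P1).
Proof.
move=> xP1 x_test.
have le_total : total (rank_le s tb) by exact: rank_le_total.
have le_trans : transitive (rank_le s tb) by exact: rank_le_trans.
have le_anti : antisymmetric (rank_le s tb) by exact: rank_le_anti.
have ranked_x : ranked s tb (x |: P1) = sort (rank_le s tb) (x :: enum P1).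
  exact/(perm_sortP le_total le_trans le_anti)/perm_enum_setU1.
rewrite /RS_TSP ranked_x /ranked.
have [a [b [-> ->]]] := sort_cons_split le_total le_trans le_anti (enum P1) x.
rewrite !rank_sumE; apply: rank_sum_insert_lt => //; first exact: normr_rs_sign_le1.
by rewrite /rs_sign x_test.
Qed.
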